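(* Let $n, r, d$ be positive integers with $n\geqslant r+1$. Then $m_e(K_n^d, r)=\binom{d+r}{d+1}$.
   Context: All graphs are finite, simple and undirected. Given graphs $G$ and $H$, the $H$-bootstrap percolation process on $G$ starts with a set $E_0\subseteq E(G)$ of initially activated edges, and for $i\geqslant1$, $E_i$ consists of $E_{i-1}$ together with all edges $e\in E(G)$ for which there is a subgraph $H_e$ of $G$ isomorphic to $H$ with $e\in E(H_e)$ and $E(H_e)\setminus\{e\}\subseteq E_{i-1}$. $E_0$ is a percolating set if $\bigcup_{i\geqslant0}E_i=E(G)$. The weak saturation number $\mathrm{wsat}(G,H)$ is the minimum size of a percolating set. Define $m_e(G,r)=\mathrm{wsat}(G,S_{r+1})$, where $S_{r+1}$ is the star graph on $r+2$ vertices (one center and $r+1$ leaves). $K_n$ is the complete graph with vertex set $\{0,\ldots,n-1\}$ and $K_n^d$ is the Cartesian product of $d$ copies of $K_n$: vertex set $\{0,\ldots,n-1\}^d$, two vertices adjacent iff they differ in exactly one coordinate. *)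

From mathcomp Require Import all_boot.
Set Implicit Arguments. Unset Strict Implicit. Unset Printing Implicit Defensive.

(* A simple graph is given by a finite vertex type V and an adjacency relation
   adj : rel V (assumed symmetric and irreflexive where relevant). *)
Definition edges (V : finType) (adj : rel V) : {set {set V}} :=
  [set [set p.1; p.2] | p : V * V & adj p.1 p.2].

(* One round of the H-bootstrap percolation process on G:
   E_i = E_{i-1} together with every edge e of G for which there is a subgraph
   H_e of G isomorphic to H (an injective homomorphic image f(H)) with
   e in E(H_e) and E(H_e) \ {e} contained in E_{i-1}. *)
Definition bp_step (VG : finType) (adjG : rel VG) (VH : finType) (adjH : rel VH)
  (A : {set {set VG}}) : {set {set VG}} :=
  A :|: [set e in edges adjG |
    [exists f : {ffun VH -> VG},
      [&& injectiveb f,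
          [forall a, forall b, adjH a b ==> adjG (f a) (f b)] &
          [exists a, exists b,
             [&& adjH a b, e == [set f a; f b] &
                 [forall a', forall b', adjH a' b' ==>
                    ([set f a'; f b'] == e) || ([set f a'; f b'] \in A)]]]]]].

Definition percolating (VG : finType) (adjG : rel VG) (VH : finType) (adjH : rel VH)
  (E0 : {set {set VG}}) : Prop :=
  E0 \subset edges adjG /\
  exists k : nat, iter k (bp_step adjG adjH) E0 = edges adjG.

Definition is_wsat (VG : finType) (adjG : rel VG) (VH : finType) (adjH : rel VH)
  (m : nat) : Prop :=
  (exists E0, percolating adjG adjH E0 /\ #|E0| = m) /\
  (forall E0, percolating adjG adjH E0 -> m <= #|E0|).

(* The star S_{r+1}: center 0 and r+1 leaves 1..r+1, on vertex set 'I_(r+2). *)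
Definition star_adj (r : nat) : rel 'I_(r.+2) :=
  fun i j => (val i == 0) != (val j == 0).

Definition is_me (VG : finType) (adjG : rel VG) (r : nat) (m : nat) : Prop :=
  is_wsat adjG (@star_adj r) m.

Definition hamming_adj (n d : nat) : rel {ffun 'I_d -> 'I_n} :=
  fun x y => #|[set i | x i != y i]| == 1.

From mathcomp Require Import all_boot all_algebra perm zify.
Set Implicit Arguments. Unset Strict Implicit. Unset Printing Implicit Defensive.
Import GRing.Theory Num.Theory.

(* Lower bound, by the polynomial method.  Give every pair (coordinate i, value s) a distinct
   rational label.  An edge {x, y} of K_n^d, with x and y differing in coordinate i, yields the
   point of Q^(d+1) formed by the d labels of x and the label of y at i; for a symmetric
   polynomial the value there does not depend on the orientation of the edge.  Let P be
   symmetric in d+1 variables with every exponent below r; these form a space of dimension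
   C(d+r, d+1).  If P vanishes on r edges at a vertex c, then as a polynomial in the extra
   variable it has degree < r and r roots, so it vanishes on every edge at c: the edges where
   P vanishes are closed under S_(r+1)-percolation.  So if E0 percolates, P vanishes on all
   edges, hence (as r < n) on a grid, hence P = 0, and evaluation on E0 is injective.
   Upper bound.  The edges in direction 0 whose endpoints both have coordinate sum at most r
   are at most C(d+r, d+1) by stars and bars, and they percolate: by induction on a potential,
   every vertex has at least r active edges to vertices of smaller potential or in the seed. *)

Lemma set2_eq (T : finType) (x y p q : T) :
  [set x; y] = [set p; q] -> (x = p /\ y = q) \/ (x = q /\ y = p).
Proof.
move=> Exy.
have in_pq z : z \in [set x; y] -> z \in [set p; q] by rewrite Exy.
have in_xy z : z \in [set p; q] -> z \in [set x; y] by rewrite Exy.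
case/set2P: (in_pq x (set21 x y)) => ?; case/set2P: (in_pq y (set22 x y)) => ?;
  subst; auto.
- by case/set2P: (in_xy q (set22 p q)) => ?; subst; left.
- by case/set2P: (in_xy p (set21 p q)) => ?; subst; left.
Qed.

Lemma exists_card_between (T : finType) (A B : {set T}) m :
  A \subset B -> #|A| <= m <= #|B| ->
  exists C : {set T}, [/\ A \subset C, C \subset B & #|C| = m].
Proof.
move Ek: (m - #|A|) => k; elim: k A Ek => [|k IHk] A Ek AB /andP[Am mB].
  by exists A; split=> //; apply/eqP; rewrite eqn_leq Am; lia.
have /subsetPn[b Bb Ab] : ~~ (B \subset A).
  by apply: contraTN mB => /subset_leq_card; lia.
have [|||C [bAC CB <-]] := IHk (b |: A).
- by rewrite cardsU1 Ab; lia.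
- by rewrite subUset sub1set Bb.
- by rewrite cardsU1 Ab; apply/andP; split; lia.
by exists C; split=> //; apply: subset_trans bAC; apply: subsetUr.
Qed.

Lemma inflationary_iter_closed (T : finType) (F : {set T} -> {set T}) (A : {set T}) :
  (forall B : {set T}, B \subset F B) -> exists k, F (iter k F A) \subset iter k F A.
Proof.
move=> incF.
suff /(_ #|T|.+1)[// | ] : forall k, (exists j, F (iter j F A) \subset iter j F A) \/
                                     k <= #|iter k F A|.
  by move/leq_trans/(_ (max_card _)); rewrite ltnn.
elim=> [|k [// | IHk]]; [by right | by left |].
have [closed_k | open_k] := boolP (F (iter k F A) \subset iter k F A); first by left; exists k.
by right; apply: leq_ltn_trans IHk (proper_card _); rewrite properE incF.
Qed.

Lemma mem_edges (V : finType) (adj : rel V) x y : adj x y -> [set x; y] \in edges adj.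
Proof. by move=> xy; apply/imsetP; exists (x, y); rewrite // inE. Qed.

Section Percolation.
Variables (VG VH : finType) (adjG : rel VG) (adjH : rel VH).
Local Notation step := (bp_step adjG adjH).
Local Notation percolating := (percolating adjG adjH).

Definition bp_new (A : {set {set VG}}) (e : {set VG}) : bool :=
  [exists f : {ffun VH -> VG},
    [&& injectiveb f,
        [forall a, forall b, adjH a b ==> adjG (f a) (f b)] &
        [exists a, exists b,
           [&& adjH a b, e == [set f a; f b] &
               [forall a', forall b', adjH a' b' ==>
                  ([set f a'; f b'] == e) || ([set f a'; f b'] \in A)]]]]].

Lemma bp_stepE (A : {set {set VG}}) : step A = A :|: [set e in edges adjG | bp_new A e].
Proof. by []. Qed.

Lemma bp_step_incl (A : {set {set VG}}) : A \subset step A.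
Proof. exact: subsetUl. Qed.

Lemma bp_newS (A B : {set {set VG}}) e : A \subset B -> bp_new A e -> bp_new B e.
Proof.
move=> AB /existsP[f /and3P[f_inj f_hom /existsP[a /existsP[b /and3P[ab e_ab f_old]]]]].
apply/existsP; exists f; rewrite f_inj f_hom; apply/existsP; exists a; apply/existsP; exists b.
rewrite ab e_ab; apply/'forall_'forall_implyP => a' b' ab'.
by case/orP: (implyP (forallP (forallP f_old a') b') ab') => [-> | /(subsetP AB) ->];
  rewrite ?orbT.
Qed.

Lemma bp_stepS (A B : {set {set VG}}) : A \subset B -> step A \subset step B.
Proof.
move=> AB; rewrite (bp_stepE A) (bp_stepE B); apply: setUSS; first exact: AB.
by apply/subsetP => e /setIdP[eE /(bp_newS AB) eB]; apply/setIdP; split.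
Qed.

Lemma bp_step_edges (A : {set {set VG}}) : A \subset edges adjG -> step A \subset edges adjG.
Proof. by move=> AE; rewrite bp_stepE subUset AE; apply/subsetP => e /setIdP[]. Qed.

Lemma iter_bp_step_edges (A : {set {set VG}}) k :
  A \subset edges adjG -> iter k step A \subset edges adjG.
Proof. by move=> AE; elim: k => [|k IHk]; [exact: AE | apply: bp_step_edges]. Qed.

Lemma iter_bp_stepS (A B : {set {set VG}}) k : A \subset B -> iter k step A \subset iter k step B.
Proof. by move=> AB; elim: k => [|k IHk]; [exact: AB | apply: bp_stepS]. Qed.

Lemma percolatingS (A B : {set {set VG}}) :
  percolating A -> A \subset B -> B \subset edges adjG -> percolating B.
Proof.
move=> [_ [k Ak]] AB BE; split=> //; exists k; apply/eqP.
by rewrite eqEsubset iter_bp_step_edges //= -{1}Ak iter_bp_stepS.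
Qed.

Lemma percolating_of_closed (A : {set {set VG}}) : A \subset edges adjG ->
  (forall C : {set {set VG}}, A \subset C -> step C \subset C -> edges adjG \subset C) ->
  percolating A.
Proof.
move=> AE closedE; split=> //; have [k closed_k] := inflationary_iter_closed A bp_step_incl.
exists k; apply/eqP; rewrite eqEsubset iter_bp_step_edges //= closedE //.
by elim: k {closed_k} => // k /subset_trans; apply; rewrite iterS; apply: bp_step_incl.
Qed.

Lemma is_wsat_of_bounds m : (forall A, percolating A -> m <= #|A|) ->
  (exists2 A, percolating A & #|A| <= m) -> is_wsat adjG adjH m.
Proof.
move=> lb [A percA Am]; split=> //.
have /lb mE : percolating (edges adjG) by split=> //; exists 0.
have [C [AC CE <-]] := exists_card_between (proj1 percA) (introT andP (conj Am mE)).
by exists C; split=> //; apply: percolatingS percA AC CE.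
Qed.

End Percolation.

Lemma star_adj_center r (a b : 'I_r.+2) :
  star_adj a b -> (a = ord0 /\ b != ord0) \/ (b = ord0 /\ a != ord0).
Proof.
have val0 (j : 'I_r.+2) : (val j == 0) = (j == ord0) by [].
rewrite /star_adj !val0.
by case: (eqVneq a ord0) => [-> | a0]; case: (eqVneq b ord0) => [-> | b0]; auto.
Qed.

Section StarProcess.
Variables (V : finType) (adj : rel V) (r : nat).
Hypotheses (adj_sym : symmetric adj) (adj_irr : irreflexive adj).
Local Notation step := (bp_step adj (@star_adj r)).

Lemma star_step_sound (A : {set {set V}}) e : e \in step A ->
  e \in A \/ exists c w, [/\ adj c w, e = [set c; w] &
     r <= #|[set u | adj c u & (u != w) && ([set c; u] \in A)]|].
Proof.
rewrite bp_stepE => /setUP[eA | /setIdP[_ /existsP[f f_star]]]; [by left | right].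
case/and3P: f_star => /injectiveP f_inj f_hom.
case/existsP=> a /existsP[b /and3P[ab /eqP e_ab f_old]].
have f_edge a' b' : star_adj a' b' -> adj (f a') (f b').
  exact: (implyP (forallP (forallP f_hom a') b')).
have f_old' a' b' : star_adj a' b' -> ([set f a'; f b'] == e) || ([set f a'; f b'] \in A).
  exact: (implyP (forallP (forallP f_old a') b')).
have [l l0 e_l] : exists2 l, l != ord0 & e = [set f ord0; f l].
  case: (star_adj_center ab) => [[a0 b0] | [b0 a0]]; [exists b | exists a];
    by rewrite // e_ab ?a0 ?b0 // setUC.
have star0 (j : 'I_r.+2) : j != ord0 -> star_adj ord0 j.
  by rewrite /star_adj /=.
exists (f ord0), (f l); split=> //; first exact/f_edge/star0.
have card_leaves : #|[set j : 'I_r.+2 | (j != ord0) && (j != l)]| = r.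
  have -> : [set j | (j != ord0) && (j != l)] = ~: [set ord0; l].
    by apply/setP => j; rewrite !inE negb_or.
  by move: (cardsC [set ord0; l]); rewrite cards2 eq_sym l0 card_ord; lia.
rewrite -[X in X <= _]card_leaves -(card_in_imset (f := f)); last by move=> ? ? _ _; apply: f_inj.
apply/subset_leq_card/subsetP => _ /imsetP[j /[!inE] /andP[j0 jl] ->].
rewrite f_edge ?star0 // (inj_eq f_inj) jl /=.
case/orP: (f_old' _ _ (star0 _ j0)) => // /eqP; rewrite e_l.
move=> /set2_eq[[_ /f_inj j_l] | [/f_inj l_0 _]].
  by move: jl; rewrite j_l eqxx.
by move: l0; rewrite -l_0 eqxx.
Qed.

Lemma star_step_complete (C : {set {set V}}) c w : adj c w ->
  r <= #|[set u | adj c u & [set c; u] \in C]| -> [set c; w] \in step C.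
Proof.
move=> cw; set U := [set u | _ & _] => rU; rewrite bp_stepE; apply/setUP.
have [cwC | cwC] := boolP ([set c; w] \in C); [by left | right].
have [s [s_uniq s_size sU]] := card_geqP rU.
have t_uniq : uniq [:: c, w & s].
  rewrite /= s_uniq !inE negb_or andbT -andbA; apply/and3P; split.
  - by apply: contraTneq cw => ->; rewrite adj_irr.
  - by apply/negP => /sU; rewrite inE adj_irr.
  - by apply/negP => /sU; rewrite inE (negbTE cwC) andbF.
(* The star with centre c and leaves w and the r active neighbours listed in s. *)
pose f := [ffun k : 'I_r.+2 => nth c [:: c, w & s] k].
have f0 : f ord0 = c by rewrite ffunE.
have f_leaf k : k != ord0 -> f k \in w :: s.
  rewrite ffunE; case: k => [[// | k] /= k_lt] _.
  by rewrite mem_nth //= s_size.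
have leaf_ok u : u \in w :: s -> adj c u && (([set c; u] == [set c; w]) || ([set c; u] \in C)).
  by case/predU1P => [-> | /sU]; rewrite ?cw ?eqxx // inE => /andP[-> ->]; rewrite orbT.
apply/setIdP; split; first exact: mem_edges.
apply/existsP; exists f; apply/and3P; split.
- apply/injectiveP => a b; rewrite !ffunE => /eqP.
  by rewrite nth_uniq //= ?s_size // => /eqP/val_inj.
- apply/'forall_'forall_implyP => a b /star_adj_center[[-> /f_leaf] | [-> /f_leaf]];
    move/leaf_ok/andP => [cu _]; by rewrite f0 // adj_sym.
- apply/existsP; exists ord0; apply/existsP; exists (Ordinal (isT : 1 < r.+2)).
  rewrite !ffunE eqxx; apply/'forall_'forall_implyP => a b.
  case/star_adj_center=> [[-> /f_leaf] | [-> /f_leaf]] /leaf_ok/andP[_];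
    by rewrite f0 // setUC.
Qed.

End StarProcess.

Section Hamming.
Variables n d : nat.
Local Notation V := {ffun 'I_d -> 'I_n}.
Local Notation adj := (@hamming_adj n d).

Definition upd (x : V) (i : 'I_d) (s : 'I_n) : V := [ffun j => if j == i then s else x j].

Lemma upd_same (x : V) i s : upd x i s i = s.
Proof. by rewrite ffunE eqxx. Qed.

Lemma upd_other (x : V) i s j : j != i -> upd x i s j = x j.
Proof. by rewrite ffunE => /negbTE ->. Qed.

Lemma upd_upd (x : V) i s t : upd (upd x i s) i t = upd x i t.
Proof. by apply/ffunP => j; rewrite !ffunE; case: eqP. Qed.

Lemma upd_id (x : V) i : upd x i (x i) = x.
Proof. by apply/ffunP => j; rewrite ffunE; case: eqP => [-> |]. Qed.

Lemma upd_inj (x : V) i j s t :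
  s != x i -> t != x j -> upd x i s = upd x j t -> i = j /\ s = t.
Proof.
move=> sxi txj eq_st; have ij : i = j.
  apply/eqP; apply: contraNT sxi => ij.
  by rewrite -[s](upd_same x i s) eq_st upd_other // eq_sym.
by split=> //; rewrite -[s](upd_same x i s) eq_st ij upd_same.
Qed.

Lemma adj_upd (x : V) i s : adj x (upd x i s) = (s != x i).
Proof.
rewrite /hamming_adj; have -> : [set j | x j != upd x i s j] = if s != x i then [set i] else set0.
  apply/setP => j; rewrite inE ffunE; case: (eqVneq j i) => [-> | ji].
    by case: ifP; rewrite !inE ?eqxx eq_sym // => /negbFE ->.
  by case: ifP; rewrite !inE ?eqxx ?(negbTE ji).
by case: ifP; rewrite ?cards1 ?cards0.
Qed.

Lemma hamming_adjP (x y : V) :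
  reflect (exists2 i, y i != x i & y = upd x i (y i)) (adj x y).
Proof.
apply: (iffP idP) => [/cards1P[i xy_i] | [i yi ->]]; last by rewrite adj_upd.
have diff j : (x j != y j) = (j == i) by rewrite -in_set1 -xy_i inE.
exists i; first by rewrite eq_sym diff.
apply/ffunP => j; rewrite ffunE; case: eqVneq => [-> // | /negbTE ji].
by move: (diff j); rewrite ji => /negbFE/eqP.
Qed.

Lemma hamming_adj_sym : symmetric adj.
Proof.
by move=> x y; rewrite /hamming_adj; congr (_ == 1); apply: eq_card => i; rewrite !inE eq_sym.
Qed.

Lemma hamming_adj_irr : irreflexive adj.
Proof.
move=> x; rewrite /hamming_adj (_ : [set i | x i != x i] = set0) ?cards0 //.
by apply/setP => i; rewrite !inE eqxx.
Qed.

End Hamming.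

Section LinearIndependence.
Variable F : fieldType.
Local Open Scope ring_scope.

Lemma leq_card_indep (I J : finType) (A : {set I}) (B : {set J})
    (M : I -> J -> F) :
  (forall v : I -> F,
     {in B, forall j, \sum_(i in A) v i * M i j = 0} -> {in A, forall i, v i = 0}) ->
  (#|A| <= #|B|)%N.
Proof.
move=> indep; have [-> | [i0 Ai0]] := set_0Vmem A; first by rewrite cards0.
pose N := \matrix_(i < #|A|, j < #|B|) M (enum_val i) (enum_val j).
suff : row_free N by rewrite -row_leq_rank => /leq_trans; apply; apply: rank_leq_col.
apply/inj_row_free => v vN0; apply/rowP => i; rewrite mxE.
rewrite -[i](enum_valK_in Ai0).
apply: (indep (fun t => v ord0 (enum_rank_in Ai0 t))) (enum_valP i) => j Bj.
transitivity ((v *m N) ord0 (enum_rank_in Bj j)); last by rewrite vN0 mxE.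
rewrite mxE big_enum_val; apply: eq_bigr => k _.
by rewrite enum_valK_in mxE enum_rankK_in.
Qed.

End LinearIndependence.

Section Polynomials.
Variables (F : fieldType) (K : finType) (r : nat).
Local Notation exps := {ffun K -> 'I_r}.
Local Open Scope ring_scope.

(* A polynomial in the variables K with every exponent below r, given by its coefficient
   function h on exponent vectors. *)
Definition peval (h : exps -> F) (z : K -> F) : F :=
  \sum_(a : exps) h a * \prod_k z k ^+ a k.

Definition symmetric_coefs (h : exps -> F) : Prop :=
  forall (s : {perm K}) (a : exps), h [ffun k => a (s k)] = h a.

Lemma peval_eq h z z' : z =1 z' -> peval h z = peval h z'.
Proof.
by move=> zz'; apply: eq_bigr => a _; congr (_ * _); apply: eq_bigr => k _; rewrite zz'.
Qed.

Lemma peval_perm h (s : {perm K}) z :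
  symmetric_coefs h -> peval h (fun k => z (s k)) = peval h z.
Proof.
move=> h_sym; rewrite /peval (reindex_inj (h := fun a : exps => [ffun k => a (s k)])) /=.
  apply: eq_bigr => a _; rewrite h_sym; congr (_ * _).
  by rewrite [RHS](reindex_inj (@perm_inj _ s)); apply: eq_bigr => k _; rewrite ffunE.
move=> a b /ffunP eq_ab; apply/ffunP => k.
by have := eq_ab ((s^-1)%g k); rewrite !ffunE permKV.
Qed.

Lemma peval_lin (I : finType) (A : {set I}) (c : I -> F) (hs : I -> exps -> F) z :
  peval (fun a => \sum_(i in A) c i * hs i a) z = \sum_(i in A) c i * peval (hs i) z.
Proof.
rewrite /peval; under eq_bigr do rewrite big_distrl; rewrite exchange_big.
by apply: eq_bigr => i _; rewrite big_distrr; apply: eq_bigr => a _ /=; rewrite mulrA.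
Qed.

Lemma peval_line_poly h (z : F -> K -> F) k0 :
  (forall w, z w k0 = w) -> (forall w k, k != k0 -> z w k = z 0 k) ->
  exists2 p : {poly F}, (size p <= r)%N & forall w, peval h (z w) = p.[w].
Proof.
move=> zk0 zk.
exists (\poly_(j < r) \sum_(a : exps | a k0 == j :> nat) h a * \prod_(k | k != k0) z 0 k ^+ a k).
  exact: size_poly.
move=> w; rewrite horner_poly /peval (partition_big (fun a : exps => a k0) xpredT) //=.
apply: eq_bigr => j _; rewrite big_distrl; apply: eq_bigr => a /eqP <-.
rewrite (bigD1 k0) //= zk0 -mulrA [_ * w ^+ _]mulrC.
by congr (_ * (_ * _)); apply: eq_bigr => k /zk ->.
Qed.

Lemma peval_line_eq0 h (z : F -> K -> F) k0 (q : 'I_r -> F) :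
  (forall w, z w k0 = w) -> (forall w k, k != k0 -> z w k = z 0 k) -> injective q ->
  (forall t, peval h (z (q t)) = 0) -> forall w, peval h (z w) = 0.
Proof.
move=> zk0 zk q_inj zq w; have [p size_p peval_p] := peval_line_poly h zk0 zk.
suff p0 : p = 0 by rewrite peval_p p0 horner0.
apply: (@roots_geq_poly_eq0 _ p [seq q t | t <- enum 'I_r]).
- by apply/allP => _ /mapP[t _ ->]; rewrite /root -peval_p zq.
- by rewrite map_inj_uniq ?enum_uniq.
- by rewrite size_map size_enum_ord.
Qed.

(* Column j of the inverse Vandermonde matrix extracts the coefficient of X^j of a polynomial
   of degree < r from its values at the nodes q. *)
Definition vdual (q : 'I_r -> F) : 'M[F]_r := invmx (Vandermonde r (\row_t q t)).

Lemma vdual_delta q :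
  injective q -> forall i j : 'I_r, \sum_t vdual q t j * q t ^+ i = (i == j)%:R.
Proof.
move=> q_inj i j.
have unit_V : Vandermonde r (\row_t q t) \in unitmx.
  rewrite unitmxE det_Vandermonde unitfE; apply/prodf_neq0 => a _; apply/prodf_neq0 => b ab.
  by rewrite !mxE subr_eq0; apply: contraTneq ab => /q_inj ->; rewrite ltnn.
have := congr1 (fun M : 'M_r => M i j) (mulmxV unit_V); rewrite !mxE => <-.
by apply: eq_bigr => t _; rewrite !mxE mulrC.
Qed.

Lemma peval_grid_eq0 h (q : K -> 'I_r -> F) : (forall k, injective (q k)) ->
  (forall s : exps, peval h (fun k => q k (s k)) = 0) -> forall a, h a = 0.
Proof.
move=> q_inj vanish b.
have extract a : \sum_(s : exps) (\prod_k vdual (q k) (s k) (b k)) *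
    (h a * \prod_k q k (s k) ^+ a k) = h a * (a == b)%:R.
  under eq_bigr do rewrite mulrCA -big_split /=.
  rewrite -big_distrr /= -(bigA_distr_bigA (fun k t => vdual (q k) t (b k) * q k t ^+ a k)) /=.
  congr (_ * _); under eq_bigr do rewrite vdual_delta //.
  have [-> | ab] := eqVneq a b; first by rewrite big1 // => k _; rewrite eqxx.
  have /existsP[k abk] : [exists k, a k != b k].
    by apply: contraNT ab => /existsPn eq_ab; apply/eqP/ffunP => k; apply/eqP/negPn.
  by rewrite (bigD1 k) //= (negbTE abk) mul0r.
transitivity (\sum_(a : exps) h a * (a == b)%:R).
  by rewrite (bigD1 b) //= eqxx mulr1 big1 ?addr0 // => a /negbTE ->; rewrite mulr0.
under eq_bigr do rewrite -extract.
rewrite exchange_big big1 // => s _; rewrite -big_distrr /=.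
by have := vanish s; rewrite /peval => ->; rewrite mulr0.
Qed.

(* The monomial symmetric polynomial m_lam, lam listing the exponents in any order. *)
Definition msym (lam : #|K|.-tuple 'I_r) (a : exps) : F := (perm_eq (codom a) lam)%:R.

Lemma msym_sym lam : symmetric_coefs (msym lam).
Proof.
move=> s a; rewrite /msym; congr ((_ : bool)%:R); apply: permPl.
have s_enum : perm_eq (map s (enum K)) (enum K).
  apply: uniq_perm; rewrite ?(map_inj_uniq (@perm_inj _ s)) ?enum_uniq //.
  by move=> k; rewrite -[k](permKV s) (mem_map (@perm_inj _ s)) !mem_enum.
have -> : codom [ffun k => a (s k)] = map a (map s (enum K)).
  by rewrite codomE -[in RHS]map_comp enumT; apply: eq_map => k; rewrite /= ffunE.
by rewrite codomE enumT; apply: perm_map; rewrite -enumT.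
Qed.

Lemma msym_Finfun (lam mu : #|K|.-tuple 'I_r) :
  sorted leq (map val lam) -> sorted leq (map val mu) ->
  msym mu (Finfun lam) = (lam == mu)%:R.
Proof.
move=> lam_sorted mu_sorted; rewrite /msym codom_ffun FinfunK; congr ((_ : bool)%:R).
apply/idP/eqP => [lam_mu | ->]; last exact: perm_refl.
by apply/val_inj/(inj_map val_inj)/(sorted_eq leq_trans anti_leq lam_sorted mu_sorted)/perm_map.
Qed.

End Polynomials.

Section LowerBound.
Variables n d r : nat.
Local Notation V := {ffun 'I_d -> 'I_n}.
Local Notation adj := (@hamming_adj n d).
Local Notation step := (bp_step adj (@star_adj r)).
Local Notation exps := {ffun option 'I_d -> 'I_r}.
Local Notation sorted_tuples := [set t : #|{: option 'I_d}|.-tuple 'I_r | sorted leq (map val t)].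
Local Open Scope ring_scope.

Definition label (p : 'I_d * 'I_n) : rat := (enum_rank p : nat)%:R.

Lemma label_inj : injective label.
Proof. by move=> p q /eqP; rewrite eqr_nat => /eqP/val_inj/enum_rank_inj. Qed.

Definition new_label (x y : V) : rat := \sum_i if x i != y i then label (i, y i) else 0.

Lemma new_label_upd (x : V) i s : s != x i -> new_label x (upd x i s) = label (i, s).
Proof.
move=> sxi; rewrite /new_label (bigD1 i) //= upd_same eq_sym sxi big1 ?addr0 // => j ji.
by rewrite upd_other // eqxx.
Qed.

Lemma new_label_inj (x u v : V) : adj x u -> adj x v -> new_label x u = new_label x v -> u = v.
Proof.
move=> /hamming_adjP[i ui ->] /hamming_adjP[j vj ->].
by rewrite !new_label_upd // => /label_inj[-> ->].
Qed.

(* The extra variable None carries the label of the coordinate in which the other endpoint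
   differs; swapping it with that coordinate's variable swaps the endpoints. *)
Definition edge_point (x : V) (w : rat) : option 'I_d -> rat := oapp (fun i => label (i, x i)) w.

Definition edge_peval (h : exps -> rat) (x y : V) : rat := peval h (edge_point x (new_label x y)).

Lemma edge_peval_sym h (x y : V) :
  symmetric_coefs h -> adj x y -> edge_peval h x y = edge_peval h y x.
Proof.
move=> h_sym /hamming_adjP[i yi ey].
have ex : x = upd y i (x i) by rewrite [in RHS]ey upd_upd upd_id.
rewrite /edge_peval {1}ey new_label_upd // {2}ex new_label_upd 1?eq_sym //.
rewrite -[LHS](peval_perm (tperm (Some i) None) _ h_sym); apply: peval_eq => -[j|] /=.
  case: (eqVneq j i) => [-> | ji]; first by rewrite tpermL.
  rewrite tpermD //=; first by rewrite ey upd_other.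
  by rewrite eq_sym.
by rewrite tpermR.
Qed.

(* 0 off edges; on an edge, the orientation picked does not matter for symmetric h. *)
Definition edge_eval (h : exps -> rat) (e : {set V}) : rat :=
  if [pick p : V * V | adj p.1 p.2 && (e == [set p.1; p.2])] is Some p
  then edge_peval h p.1 p.2 else 0.

Lemma edge_evalE h (x y : V) :
  symmetric_coefs h -> adj x y -> edge_eval h [set x; y] = edge_peval h x y.
Proof.
move=> h_sym xy; rewrite /edge_eval; case: pickP => [[x' y'] /andP[/= xy' /eqP] | none].
  by case/set2_eq=> [[-> ->] // | [-> ->]]; rewrite edge_peval_sym.
by have := none (x, y); rewrite /= xy eqxx.
Qed.

Lemma edge_eval_lin (I : finType) (A : {set I}) (c : I -> rat) (hs : I -> exps -> rat) e :
  edge_eval (fun a => \sum_(i in A) c i * hs i a) e = \sum_(i in A) c i * edge_eval (hs i) e.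
Proof.
rewrite /edge_eval; case: pickP => [p _ | _]; first exact: peval_lin.
by rewrite big1 // => i _; rewrite mulr0.
Qed.

Lemma peval_edge_point_eq0 h (x : V) (U : {set V}) : (r <= #|U|)%N ->
  {in U, forall u, adj x u /\ edge_peval h x u = 0} -> forall w, peval h (edge_point x w) = 0.
Proof.
move=> rU U_ok; have [s [s_uniq s_size sU]] := card_geqP rU.
have s_nth (t : 'I_r) : nth x s t \in U by apply/sU/mem_nth; rewrite s_size.
apply: (peval_line_eq0 (k0 := None) (q := fun t : 'I_r => new_label x (nth x s t))) => //.
- by move=> w [j|].
- move=> t1 t2 /new_label_inj eq_nth.
  have /eqP := eq_nth (proj1 (U_ok _ (s_nth t1))) (proj1 (U_ok _ (s_nth t2))).
  by rewrite nth_uniq ?s_size // => /eqP/val_inj.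
- by move=> t; have [_] := U_ok _ (s_nth t).
Qed.

Lemma edge_eval_step_eq0 h (A : {set {set V}}) : symmetric_coefs h ->
  {in A, forall e, edge_eval h e = 0} -> {in step A, forall e, edge_eval h e = 0}.
Proof.
move=> h_sym A0 e /star_step_sound[/A0 // | [c [w [cw -> rU]]]].
rewrite edge_evalE //; apply: (peval_edge_point_eq0 rU) => u /[!inE] /and3P[cu _ cuA].
by split=> //; rewrite -edge_evalE // A0.
Qed.

Lemma coefs_eq0_of_edges h : (0 < d)%N -> (r < n)%N ->
  (forall x y, adj x y -> edge_peval h x y = 0) -> forall a, h a = 0.
Proof.
move=> d_gt0 r_lt_n vanish.
have point0 x w : peval h (edge_point x w) = 0.
  pose i0 := Ordinal d_gt0.
  apply: (peval_edge_point_eq0 (U := [set upd x i0 s | s in [set~ x i0]])).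
    rewrite card_in_imset ?cardsC1 ?card_ord; first by lia.
    by move=> s t /[!inE] sx tx /(upd_inj sx tx)[].
  move=> _ /imsetP[s /[!inE] sx ->]; rewrite adj_upd sx; split=> //.
  by apply: vanish; rewrite adj_upd.
have r_le_n : (r <= n)%N := ltnW r_lt_n.
apply: (peval_grid_eq0
  (q := fun k t => if k is Some i then label (i, widen_ord r_le_n t) else (t : nat)%:R)).
- move=> [i|] t1 t2 /=; first by move/label_inj => -[/val_inj].
  by move/eqP; rewrite eqr_nat => /eqP/val_inj.
- move=> s; rewrite -(point0 [ffun i => widen_ord r_le_n (s (Some i))] (s None)%:R).
  by apply: peval_eq => -[i|] /=; rewrite ?ffunE.
Qed.

Lemma lower_bound (E0 : {set {set V}}) : (0 < d)%N -> (r < n)%N ->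
  percolating adj (@star_adj r) E0 -> (#|sorted_tuples| <= #|E0|)%N.
Proof.
move=> d_gt0 r_lt_n [_ [k E0k]].
apply: (leq_card_indep (M := fun lam e => edge_eval (msym rat lam) e)) => v v_E0 mu.
rewrite inE => mu_sorted.
pose h a := \sum_(lam in sorted_tuples) v lam * msym rat lam a.
have h_sym : symmetric_coefs h by move=> s a; apply: eq_bigr => lam _; rewrite msym_sym.
have h_iter j : {in iter j step E0, forall e, edge_eval h e = 0}.
  elim: j => [e eE0 | j IHj]; last exact: edge_eval_step_eq0.
  by rewrite edge_eval_lin; apply: v_E0.
have h_edges x y : adj x y -> edge_peval h x y = 0.
  by move=> xy; rewrite -edge_evalE // (h_iter k) // E0k mem_edges.
have := coefs_eq0_of_edges d_gt0 r_lt_n h_edges (Finfun mu).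
rewrite /h (bigD1 mu) ?inE //= msym_Finfun // eqxx mulr1 big1 ?addr0 // => lam /andP[].
by rewrite inE => lam_sorted lam_mu; rewrite msym_Finfun // eq_sym (negbTE lam_mu) mulr0.
Qed.

End LowerBound.

Lemma card_pairs (I J : finType) (P : I -> J -> bool) :
  #|[set p : I * J | P p.1 p.2]| = \sum_i #|[set j | P i j]|.
Proof.
rewrite -sum1dep_card (eq_bigl (fun p : I * J => xpredT p.1 && P p.1 p.2)) //.
rewrite -(pair_big_dep xpredT P (fun _ _ => 1)).
by apply: eq_bigr => i _; apply: sum1dep_card.
Qed.

Lemma card_ord_lt n m : m <= n -> #|[set s : 'I_n | s < m]| = m.
Proof.
move=> mn; have -> : [set s : 'I_n | s < m] = widen_ord mn @: [set: 'I_m].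
  apply/setP => s; rewrite inE; apply/idP/imsetP => [sm | [t _ ->]]; last exact: (ltn_ord t).
  by exists (Ordinal sm) => //; apply: val_inj.
by rewrite card_imset ?cardsT ?card_ord // => a b [] /val_inj.
Qed.

Lemma card_ord_le_neq n m (a : 'I_n) : m < n -> m <= #|[set s : 'I_n | (s <= m) && (s != a)]|.
Proof.
move=> mn; have := cardsD1 a [set s : 'I_n | s < m.+1]; rewrite card_ord_lt //.
rewrite (_ : _ :\ a = [set s : 'I_n | (s <= m) && (s != a)]); first by case: (_ \in _) => /=; lia.
by apply/setP => s; rewrite !inE ltnS andbC.
Qed.

Section UpperBound.
Variables n d' r' : nat.
Hypothesis r_lt_n : r'.+1 < n.
Local Notation d := d'.+1.
Local Notation r := r'.+1.
Local Notation V := {ffun 'I_d -> 'I_n}.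
Local Notation adj := (@hamming_adj n d).
Local Notation step := (bp_step adj (@star_adj r)).

Definition tail_weight (x : V) : nat := \sum_(j < d') x (lift ord0 j).

Lemma tail_weight_upd0 (x : V) (s : 'I_n) : tail_weight (upd x ord0 s) = tail_weight x.
Proof. by apply: eq_bigr => j _; rewrite upd_other // eq_sym neq_lift. Qed.

Lemma tail_weight_upd_lt (x : V) j (s : 'I_n) :
  s < x (lift ord0 j) -> tail_weight (upd x (lift ord0 j) s) < tail_weight x.
Proof.
move=> sx; rewrite /tail_weight (bigD1 j) //= [X in _ < X](bigD1 j) //= upd_same.
under eq_bigr => k kj do rewrite upd_other ?(inj_eq (@lift_inj _ ord0)) //.
by rewrite ltn_add2r.
Qed.

Definition seed_pair (x : V) (s : 'I_n) : bool := (x ord0 < s) && (s + tail_weight x <= r).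

(* The direction-0 edges both of whose endpoints have coordinate sum at most r. *)
Definition seed : {set {set V}} :=
  [set [set p.1; upd p.1 ord0 p.2] | p in [set p : V * 'I_n | seed_pair p.1 p.2]].

Lemma seed_edges : seed \subset edges adj.
Proof.
apply/subsetP => _ /imsetP[[x s] /[!inE] /andP[x0s _] ->]; apply: mem_edges.
by rewrite adj_upd; apply: contraTneq x0s => ->; rewrite ltnn.
Qed.

Lemma mem_seed (x : V) (s : 'I_n) :
  s != x ord0 -> x ord0 <= r - tail_weight x -> s <= r - tail_weight x ->
  [set x; upd x ord0 s] \in seed.
Proof.
move=> sx x0T sT; case: (ltngtP (x ord0) s) => [x0s | sx0 | /val_inj x0s]; last first.
- by rewrite x0s eqxx in sx.
- apply/imsetP; exists (upd x ord0 s, x ord0); last by rewrite /= upd_upd upd_id setUC.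
  by rewrite inE /seed_pair /= upd_same tail_weight_upd0 sx0; lia.
apply/imsetP; exists (x, s) => //; rewrite inE /seed_pair x0s /=; lia.
Qed.

(* Stars and bars: (x_0, s - x_0 - 1, x_1, ..., x_(d-1)) is a weak composition of
   s - 1 + tail_weight x <= r - 1 into d + 1 parts. *)
Definition seed_code (x : V) (s : 'I_n) (k : 'I_d.+1) : nat :=
  if unlift ord0 k is Some k' then
    if unlift ord0 k' is Some j then x (lift ord0 j) else s - x ord0 - 1
  else x ord0.

Lemma sum_seed_code (x : V) (s : 'I_n) :
  \sum_k seed_code x s k = x ord0 + (s - x ord0 - 1) + tail_weight x.
Proof.
rewrite !big_ord_recl /seed_code unlift_none liftK unlift_none addnA.
by congr (_ + _); apply: eq_bigr => j _; rewrite !liftK.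
Qed.

Lemma seed_code_inj (x y : V) (s t : 'I_n) : seed_pair x s -> seed_pair y t ->
  seed_code x s =1 seed_code y t -> (x, s) = (y, t).
Proof.
move=> /andP[x0s _] /andP[y0t _] eq_code.
have x0y0 : x ord0 = y ord0 :> nat by have := eq_code ord0; rewrite /seed_code unlift_none.
have -> : x = y.
  apply/ffunP => i; apply: val_inj; case: (unliftP ord0 i) => [j -> | -> //].
  by have := eq_code (lift ord0 (lift ord0 j)); rewrite /seed_code !liftK.
congr (_, _); apply: val_inj; have := eq_code (lift ord0 ord0).
rewrite /seed_code liftK unlift_none /=; lia.
Qed.

Lemma card_seed : #|seed| <= 'C(d.+1 + r', d.+1).
Proof.
rewrite -card_partial_ord_partitions; apply: leq_trans (leq_imset_card _ _) _.
have code_le x s : seed_pair x s -> forall k, seed_code x s k <= r'.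
  move=> /andP[x0s sT] k; apply: leq_trans (_ : \sum_k seed_code x s k <= r').
    by rewrite (bigD1 k) //= leq_addr.
  by rewrite sum_seed_code; lia.
pose enc (p : V * 'I_n) : d.+1.-tuple 'I_r := [tuple inord (seed_code p.1 p.2 k) | k < d.+1].
have enc_val x s k : seed_pair x s -> tnth (enc (x, s)) k = seed_code x s k :> nat.
  by move=> xs; rewrite tnth_mktuple inordK // ltnS code_le.
rewrite -(card_in_imset (f := enc)).
  apply/subset_leq_card/subsetP => _ /imsetP[[x s] /[!inE] xs ->]; rewrite big_tuple.
  under eq_bigr do rewrite enc_val //.
  by move: xs; rewrite sum_seed_code /seed_pair /= => /andP[x0s sT]; lia.
move=> [x s] [y t] /[!inE] xs yt enc_eq; apply: seed_code_inj => // k.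
by rewrite -!enc_val // enc_eq.
Qed.

Section Closure.
Variable C : {set {set V}}.
Hypotheses (C_closed : step C \subset C) (seed_C : seed \subset C).

Definition saturated (x : V) : Prop := forall y, adj x y -> [set x; y] \in C.

Definition lower_neighbor (x : V) (i : 'I_d) (s : 'I_n) : bool :=
  if i == ord0 then (s <= r - tail_weight x) && (s != x ord0) else s < x i.

Lemma lower_neighbor_neq x i s : lower_neighbor x i s -> s != x i.
Proof.
rewrite /lower_neighbor; case: eqP => [-> /andP[] // | _].
by apply: contraTneq => ->; rewrite ltnn.
Qed.

Lemma card_lower_neighbors x : r <= #|[set p | lower_neighbor x p.1 p.2]|.
Proof.
rewrite card_pairs big_ord_recl.
have -> : \sum_(j < d') #|[set s | lower_neighbor x (lift ord0 j) s]| = tail_weight x.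
  apply: eq_bigr => j _; rewrite -[RHS](card_ord_lt (ltnW (ltn_ord (x (lift ord0 j))))).
  by apply: eq_card => s; rewrite !inE /lower_neighbor eq_sym (negbTE (neq_lift _ _)).
have -> : [set s | lower_neighbor x ord0 s] =
          [set s : 'I_n | (s <= r - tail_weight x) && (s != x ord0)].
  by apply/setP => s; rewrite !inE /lower_neighbor eqxx.
have := @card_ord_le_neq n (r - tail_weight x) (x ord0) (leq_ltn_trans (leq_subr _ _) r_lt_n).
lia.
Qed.

(* Lower neighbours through coordinates > 0 decrease tail_weight; through coordinate 0 they
   either give seed edges or clear the indicator. *)
Definition potential (x : V) : nat := (tail_weight x).*2 + (r - tail_weight x < x ord0).

Lemma potential_le x : potential x <= (tail_weight x).*2.+1.
Proof. by rewrite /potential; case: (_ < _); rewrite ?addn0 ?addn1. Qed.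

Lemma lower_neighbor_edge_in x i s : lower_neighbor x i s ->
  (forall y, potential y < potential x -> saturated y) -> [set x; upd x i s] \in C.
Proof.
move=> low IH; have sxi := lower_neighbor_neq low.
case: (unliftP ord0 i) => [j ej | ei]; subst i.
- move: low; rewrite /lower_neighbor eq_sym (negbTE (neq_lift _ _)) => /tail_weight_upd_lt lt_T.
  rewrite setUC; apply: IH; last by rewrite hamming_adj_sym adj_upd.
  by have := potential_le (upd x (lift ord0 j) s); rewrite /potential; lia.
- move: low; rewrite /lower_neighbor eqxx => /andP[sT _].
  have [x0T | Tx0] := leqP (x ord0) (r - tail_weight x); first exact/(subsetP seed_C)/mem_seed.
  rewrite setUC; apply: IH; last by rewrite hamming_adj_sym adj_upd.
  by rewrite /potential tail_weight_upd0 upd_same Tx0 (leq_gtF sT); lia.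
Qed.

Lemma saturated_all x : saturated x.
Proof.
suff : forall N x, potential x < N -> saturated x by apply; apply: ltnSn.
elim=> // N IHN {}x pot_x y xy; apply/(subsetP C_closed).
apply: (star_step_complete (@hamming_adj_sym n d) (@hamming_adj_irr n d) xy).
apply: leq_trans (card_lower_neighbors x) _.
rewrite -(card_in_imset (f := fun p => upd x p.1 p.2)); last first.
  move=> [i s] [j t] /[!inE] /lower_neighbor_neq sxi /lower_neighbor_neq txj /(upd_inj sxi txj).
  by case=> /= -> ->.
apply/subset_leq_card/subsetP => _ /imsetP[[i s] /[!inE] low ->].
rewrite adj_upd lower_neighbor_neq //=; apply: lower_neighbor_edge_in low _ => z pot_z.
by apply: IHN; lia.
Qed.

End Closure.

Lemma seed_percolating : percolating adj (@star_adj r) seed.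
Proof.
apply: percolating_of_closed seed_edges _ => C seed_C C_closed.
by apply/subsetP => _ /imsetP[[x y] /[!inE] xy ->]; apply: saturated_all.
Qed.

End UpperBound.

Theorem theorem3p6 (n r d : nat) :
  0 < n -> 0 < r -> 0 < d -> r + 1 <= n ->
  is_me (@hamming_adj n d) r 'C(d + r, d + 1).
Proof.
case: r d => [|r'] [|d'] // _ _ _; rewrite addn1 => r_lt_n.
have -> : 'C(d'.+1 + r'.+1, d'.+1 + 1) = 'C(d'.+2 + r', d'.+2) by rewrite addn1 addnS.
apply: is_wsat_of_bounds => [E0 E0_perc | ]; last first.
  by exists (seed n d' r'); [exact: seed_percolating | exact: card_seed].
have := lower_bound (ltn0Sn d') r_lt_n E0_perc.
by rewrite card_sorted_tuples card_option card_ord.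
Qed.
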